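(* Let $C$ be a nonempty subset of a Banach space $X$ and let $T:C\to C$ be a Kannan mapping. Then $T$ is an orbitally Kannan mapping which diminishes the radius of orbits.
   Context: $T:C\to C$ is Kannan if $\|Tx-Ty\|\le\frac12(\|x-Tx\|+\|y-Ty\|)$ for all $x,y\in C$. For $x\in X$ and $A\subseteq X$, $r_x(A)=\sup\{\|x-y\|:y\in A\}$; $O_T(x)=\{x,Tx,T^2x,\dots\}$. $T$ is orbitally Kannan if $\|Tx-Ty\|\le\frac12\big(r_x(O_T(x))+r_y(O_T(y))\big)$ for all $x,y\in C$. $T$ diminishes the radius of orbits if $r_{Tx}(O_T(Tx))\le r_x(O_T(x))$ for all $x\in C$. *)

From HB Require Import structures.
From mathcomp Require Import all_boot all_order all_algebra.
From mathcomp Require Import all_classical all_reals all_analysis.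
Set Implicit Arguments. Unset Strict Implicit. Unset Printing Implicit Defensive.
Import Order.TTheory GRing.Theory Num.Theory.
Local Open Scope classical_set_scope.
Local Open Scope ring_scope.

Section Defs.
Context {R : realType} {X : normedModType R}.

(* Kannan mapping on C (T maps C into C is a separate hypothesis). *)
Definition kannan (C : set X) (T : X -> X) : Prop :=
  forall x y, C x -> C y ->
    `|T x - T y| <= 2^-1 * (`|x - T x| + `|y - T y|).

Definition orbit (T : X -> X) (x : X) : set X := range (fun n : nat => iter n T x).

Definition radius (x : X) (A : set X) : \bar R :=
  ereal_sup [set (`|x - y|)%:E | y in A].

Definition orbitally_kannan (C : set X) (T : X -> X) : Prop :=
  forall x y, C x -> C y ->
    ((`|T x - T y|)%:E <= (2^-1)%:E * (radius x (orbit T x) + radius y (orbit T y)))%E.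

Definition diminishes_radius_of_orbits (C : set X) (T : X -> X) : Prop :=
  forall x, C x -> (radius (T x) (orbit T (T x)) <= radius x (orbit T x))%E.

End Defs.

From Pilot Require Import Defs.
From HB Require Import structures.
From mathcomp Require Import all_boot all_order all_algebra.
From mathcomp Require Import all_classical all_reals all_analysis.
From mathcomp Require Import lra.
Import Order.TTheory GRing.Theory Num.Theory.
Local Open Scope classical_set_scope.
Local Open Scope ring_scope.

(* Applying the Kannan inequality to the pair (x, Tx) gives
   ||Tx - T^2 x|| <= ||x - Tx||, so the steps along an orbit never exceed the
   first one.  Applying it to (x, T^n x) then bounds every ||Tx - T^(n+1) x||
   by ||x - Tx||, which is itself at most r_x(O_T(x)); the same bound
   ||x - Tx|| <= r_x(O_T(x)) turns the Kannan inequality into the orbital one. *)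

Lemma ler_half_sum (R : realFieldType) (a b c : R) :
  a <= 2^-1 * (b + c) -> c <= b -> a <= b.
Proof. by lra. Qed.

Section OrbitRadius.
Context {R : realType} {X : normedModType R} (T : X -> X).

Lemma radius_orbit_ge_iter (x : X) (n : nat) :
  ((`|x - iter n T x|)%:E <= Defs.radius x (Defs.orbit T x))%E.
Proof. by apply: (@ereal_sup_ubound R); exists (iter n T x) => //; exists n. Qed.

Lemma radius_orbit_le (x : X) (a : R) :
  (forall n, `|x - iter n T x| <= a) -> (Defs.radius x (Defs.orbit T x) <= a%:E)%E.
Proof. by move=> le_a; apply: ge_ereal_sup => _ [_ [n _ <-] <-]; rewrite lee_fin. Qed.

End OrbitRadius.

Section Kannan.
Context {R : realType} {X : normedModType R} (C : set X) (T : X -> X).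
Hypothesis CT : forall x, C x -> C (T x).
Hypothesis kannanT : kannan C T.

Lemma kannan_step_le (x : X) : C x -> `|T x - T (T x)| <= `|x - T x|.
Proof. by move=> Cx; have := kannanT _ _ Cx (CT _ Cx); lra. Qed.

Lemma iter_mapsto {x : X} (n : nat) : C x -> C (iter n T x).
Proof. by move=> Cx; elim: n => [|n IHn] //=; apply: CT. Qed.

Lemma kannan_iter_step_le {x : X} (n : nat) :
  C x -> `|iter n T x - iter n.+1 T x| <= `|x - T x|.
Proof.
move=> Cx; elim: n => [|n IHn] //; apply: le_trans IHn.
by apply: kannan_step_le; apply: iter_mapsto.
Qed.

Lemma kannan_dist_orbit_le {x : X} (n : nat) :
  C x -> `|T x - iter n.+1 T x| <= `|x - T x|.
Proof.
move=> Cx; apply: ler_half_sum (kannanT _ _ Cx (iter_mapsto n Cx)) _.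
exact: kannan_iter_step_le.
Qed.

Lemma kannan_orbitally_kannan : orbitally_kannan C T.
Proof.
move=> x y Cx Cy.
apply: (@le_trans _ _ ((2^-1)%:E * (`|x - T x| + `|y - T y|)%:E)%E).
  by rewrite -EFinM lee_fin; apply: kannanT.
apply: lee_wpmul2l; first by rewrite lee_fin invr_ge0.
by rewrite EFinD; apply: leeD; apply: (radius_orbit_ge_iter T _ 1).
Qed.

Lemma kannan_diminishes_radius : diminishes_radius_of_orbits C T.
Proof.
move=> x Cx; apply: le_trans (radius_orbit_ge_iter T x 1).
by apply: radius_orbit_le => n; rewrite -iterSr; apply: kannan_dist_orbit_le.
Qed.

End Kannan.

Theorem lemma4p1 (R : realType) (X : completeNormedModType R)
  (C : set X) (T : X -> X) :
  C !=set0 ->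
  (forall x, C x -> C (T x)) ->
  kannan C T ->
  orbitally_kannan C T /\ diminishes_radius_of_orbits C T.
Proof.
move=> _ CT kannanT; split.
- exact: kannan_orbitally_kannan.
- exact: kannan_diminishes_radius.
Qed.
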